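(* Let $X=(X_1,X_2,X_3,X_4)$ be a random vector of binary random variables, each taking values in $\{1,2\}$, and read indices cyclically modulo $4$, so that the neighboring pairs are $(X_1,X_2),(X_2,X_3),(X_3,X_4),(X_4,X_1)$. Then $X$ satisfies both conditional independence statements $X_1 \perp\!\!\!\perp X_3 \mid (X_2,X_4)$ and $X_2 \perp\!\!\!\perp X_4 \mid (X_1,X_3)$ if and only if at least one of the following holds: (1) the joint distribution of $X$ lies in the closure of the graphical model $\mathcal{M}_{C_4}$; (2) there is an index $i$ such that $X_i = X_{i+1}$ almost surely; (3) there is an index $i$ such that $X_i \neq X_{i+1}$ almost surely.
   Context: $C_4$ is the four-cycle graph on vertices $\{1,2,3,4\}$ with edges $\{1,2\},\{2,3\},\{3,4\},\{1,4\}$. The (undirected, discrete) graphical model $\mathcal{M}_{C_4}$ is the set of strictly positive probability distributions $p$ on $\{1,2\}^4$ that factor as $p(x_1,x_2,x_3,x_4)=\psi_{12}(x_1,x_2)\psi_{23}(x_2,x_3)\psi_{34}(x_3,x_4)\psi_{14}(x_1,x_4)$ for some functions $\psi_{ij}$; its closure is taken in the Euclidean topology on the probability simplex. Conditional independence is allowed for distributions with zeros (conditioning only on events of positive probability). *)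

From mathcomp Require Import all_boot all_order all_algebra.
From mathcomp Require Import reals.
Set Implicit Arguments. Unset Strict Implicit. Unset Printing Implicit Defensive.
Import Order.TTheory GRing.Theory Num.Theory.
Local Open Scope ring_scope.

(* Vertex i+1 of C_4 is represented by (i : 'I_4); the value 1 (resp. 2) of a
   binary variable is represented by 0 (resp. 1) in 'I_2. *)
Definition state := {ffun 'I_4 -> 'I_2}.

Definition v1 : 'I_4 := @Ordinal 4 0 isT.
Definition v2 : 'I_4 := @Ordinal 4 1 isT.
Definition v3 : 'I_4 := @Ordinal 4 2 isT.
Definition v4 : 'I_4 := @Ordinal 4 3 isT.

Section Defs.
Variable R : realType.

Definition is_distr (p : state -> R) : Prop :=
  (forall x, 0 <= p x) /\ \sum_(x : state) p x = 1.

Definition Pr (p : state -> R) (E : pred state) : R := \sum_(x : state | E x) p x.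

Definition cond_indep (p : state -> R) (i j k l : 'I_4) : Prop :=
  forall a b : 'I_2,
    let C := Pr p [pred x : state | (x k == a) && (x l == b)] in
    0 < C ->
    forall u v : 'I_2,
      Pr p [pred x : state | [&& x i == u, x j == v, x k == a & x l == b]] / C =
      (Pr p [pred x : state | [&& x i == u, x k == a & x l == b]] / C) *
      (Pr p [pred x : state | [&& x j == v, x k == a & x l == b]] / C).

Definition in_model_C4 (q : state -> R) : Prop :=
  is_distr q /\ (forall x, 0 < q x) /\
  exists psi12 psi23 psi34 psi14 : 'I_2 -> 'I_2 -> R,
    forall x : state,
      q x = psi12 (x v1) (x v2) * psi23 (x v2) (x v3) *
            psi34 (x v3) (x v4) * psi14 (x v1) (x v4).

(* Euclidean closure (all norms on the finite-dimensional space agree) *)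
Definition in_closure_model_C4 (p : state -> R) : Prop :=
  forall eps : R, 0 < eps ->
    exists q : state -> R, in_model_C4 q /\ forall x, `|p x - q x| < eps.

Definition as_equal_next (p : state -> R) (i : 'I_4) : Prop :=
  Pr p [pred x : state | x i != x (ordS i)] = 0.

Definition as_diff_next (p : state -> R) (i : 'I_4) : Prop :=
  Pr p [pred x : state | x i == x (ordS i)] = 0.

End Defs.

From mathcomp Require Import all_boot all_order all_algebra.
From mathcomp Require Import boolp classical_sets reals filter topology normedtype realfun.
From mathcomp Require Import ring lra.
Import Order.TTheory GRing.Theory Num.Theory numFieldNormedType.Exports.
Local Open Scope ring_scope.
Local Open Scope classical_set_scope.
Set Implicit Arguments. Unset Strict Implicit. Unset Printing Implicit Defensive.

(* Both conditional independences say that the 2x2 slices of the table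
   p(x1,x2,x3,x4) obtained by fixing (x2,x4), resp. (x1,x3), are singular.
   These binomial equations hold on the model, hence on its closure; they also
   hold when some edge is a.s. constant or a.s. non-constant, since the two
   states in each monomial differ at two opposite vertices and therefore
   disagree on the constancy of every edge.
   Conversely, if some slice is positive, the binomials factor p along the
   edges of the cycle with nonnegative factors, and adding t > 0 to every
   factor gives model points tending to p.  If no slice is positive, the
   binomials force p to vanish on one class of each of the four pairs of
   complementary edge patterns.  Of the sixteen possible supports, eight make
   an edge a.s. constant or a.s. non-constant, and the other eight consist of
   the states deviating on exactly one edge from an odd pattern g; such a p is
   the limit as t -> 0 of the model points
   t ^ (#deviations - 1) * prod_e (c_e + t). *)

Definition i0 : 'I_2 := @Ordinal 2 0 isT.
Definition i1 : 'I_2 := @Ordinal 2 1 isT.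

Lemma I2P (a : 'I_2) : a = i0 \/ a = i1.
Proof. by case: a => [[|[|n]] lt_n2] //; [left | right]; exact: val_inj. Qed.

Definition neg (a : 'I_2) : 'I_2 := if a == i0 then i1 else i0.

Lemma negK : involutive neg.
Proof. by move=> a; case: (I2P a) => ->. Qed.

Lemma I4P (i : 'I_4) : [\/ i = v1, i = v2, i = v3 | i = v4].
Proof.
case: i => [[|[|[|[|n]]]] lt_n4] //;
  [constructor 1 | constructor 2 | constructor 3 | constructor 4]; exact: val_inj.
Qed.

Lemma ordS_v1 : ordS v1 = v2. Proof. exact: val_inj. Qed.
Lemma ordS_v2 : ordS v2 = v3. Proof. exact: val_inj. Qed.
Lemma ordS_v3 : ordS v3 = v4. Proof. exact: val_inj. Qed.
Lemma ordS_v4 : ordS v4 = v1. Proof. exact: val_inj. Qed.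
Definition ordS_v := (ordS_v1, ordS_v2, ordS_v3, ordS_v4).

Lemma big_I4 (T : Type) (idx : T) (op : T -> T -> T) (F : 'I_4 -> T) :
  \big[op/idx]_(i : 'I_4) F i = op (F v1) (op (F v2) (op (F v3) (op (F v4) idx))).
Proof.
rewrite !big_ord_recl big_ord0.
by congr (op (F _) (op (F _) (op (F _) (op (F _) _)))); exact: val_inj.
Qed.

Definition mk (a b c d : 'I_2) : state := [ffun i : 'I_4 => nth a [:: a; b; c; d] i].

Lemma mk_nth a b c d i : mk a b c d i = nth a [:: a; b; c; d] i.
Proof. exact: ffunE. Qed.

Lemma state_mk (x : state) : x = mk (x v1) (x v2) (x v3) (x v4).
Proof. by apply/ffunP => i; rewrite mk_nth; case: (I4P i) => ->. Qed.

Lemma eq_mk (x : state) a b c d :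
  (x == mk a b c d) = [&& x v1 == a, x v2 == b, x v3 == c & x v4 == d].
Proof.
have [-> | ne] := eqVneq x; first by rewrite !mk_nth !eqxx.
apply/esym/negbTE; apply: contra ne => /and4P[/eqP<- /eqP<- /eqP<- /eqP<-].
by rewrite -state_mk.
Qed.

Lemma edge_changes_even (x : state) : ~~ odd (\sum_(e : 'I_4) (x e != x (ordS e))).
Proof.
rewrite big_I4 !ordS_v.
by case: (I2P (x v1)) => ->; case: (I2P (x v2)) => ->; case: (I2P (x v3)) => ->;
  case: (I2P (x v4)) => ->.
Qed.

Lemma eq_state_edges (x y : state) (v : 'I_4) :
  (forall e, (x e == x (ordS e)) = (y e == y (ordS e))) -> x v = y v -> x = y.
Proof.
move=> same_edges.
have step e : x e = y e -> x (ordS e) = y (ordS e).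
  move: (same_edges e) => /[swap] ->.
  by case: (I2P (y e)) => ->; case: (I2P (x (ordS e))) => ->; case: (I2P (y (ordS e))) => ->.
move=> /[dup] h1 /step h2; move: (step _ h2) => h3; move: (step _ h3) => h4.
apply/ffunP => i; case: (I4P v) h1 h2 h3 h4 => -> h1; rewrite !ordS_v => h2 h3 h4;
  by case: (I4P i) => ->.
Qed.

Section Tables.
Variable R : realType.
Implicit Types m : 'I_2 -> 'I_2 -> R.

Definition singular m := m i0 i0 * m i1 i1 = m i0 i1 * m i1 i0.

Definition row_sum m u := m u i0 + m u i1.
Definition col_sum m v := m i0 v + m i1 v.
Definition table_sum m := m i0 i0 + m i0 i1 + m i1 i0 + m i1 i1.
Definition col_share m v := col_sum m v / table_sum m.

Lemma table_indep_singular m : (forall u v, 0 <= m u v) ->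
  (0 < table_sum m -> forall u v,
     m u v / table_sum m = row_sum m u / table_sum m * (col_sum m v / table_sum m))
  <-> singular m.
Proof.
move=> m_ge0; have := m_ge0 i0 i0; have := m_ge0 i0 i1; have := m_ge0 i1 i0.
have := m_ge0 i1 i1 => ge11 ge10 ge01 ge00; rewrite /row_sum /col_sum /singular.
split=> [indep | sing T_gt0 u v].
  have [T_gt0 | T_le0] := ltrP 0 (table_sum m); last first.
    have m00 : m i0 i0 = 0 by rewrite /table_sum in T_le0; lra.
    have m01 : m i0 i1 = 0 by rewrite /table_sum in T_le0; lra.
    by rewrite m00 m01 !mul0r.
  have Tn0 : table_sum m != 0 by rewrite gt_eqF.
  have : m i0 i0 * table_sum m = (m i0 i0 + m i0 i1) * (m i0 i0 + m i1 i0).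
    have -> : m i0 i0 * table_sum m = m i0 i0 / table_sum m * table_sum m ^+ 2 by field.
    by rewrite indep //; field.
  rewrite /table_sum; lra.
have Tn0 : table_sum m != 0 by rewrite gt_eqF.
have key : m u v * table_sum m = (m u i0 + m u i1) * (m i0 v + m i1 v).
  by rewrite /table_sum; case: (I2P u) => ->; case: (I2P v) => ->; lra.
have -> : m u v / table_sum m = m u v * table_sum m / table_sum m ^+ 2 by field.
by rewrite key; field.
Qed.

Lemma singular_rank1 m : (forall u v, 0 <= m u v) -> singular m ->
  forall u v, m u v = row_sum m u * col_share m v.
Proof.
move=> m_ge0 sing u v; rewrite /col_share.
have [T_gt0 | T_le0] := ltrP 0 (table_sum m).
  have Tn0 : table_sum m != 0 by rewrite gt_eqF.
  by rewrite -[LHS](divfK Tn0) ((table_indep_singular m_ge0).2 sing T_gt0); field.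
have := m_ge0 i0 i0; have := m_ge0 i0 i1; have := m_ge0 i1 i0; have := m_ge0 i1 i1.
rewrite /table_sum in T_le0 => *.
have m0 u' v' : m u' v' = 0 by case: (I2P u') => ->; case: (I2P v') => ->; lra.
by rewrite /row_sum !m0 add0r mul0r.
Qed.

Lemma row_sum_ge0 m u : (forall u v, 0 <= m u v) -> 0 <= row_sum m u.
Proof. by move=> m_ge0; rewrite addr_ge0. Qed.

Lemma col_share_ge0 m v : (forall u v, 0 <= m u v) -> 0 <= col_share m v.
Proof. by move=> m_ge0; rewrite divr_ge0 // !addr_ge0. Qed.

Lemma singular_cross m : singular m -> forall u v u' v', m u v * m u' v' = m u v' * m u' v.
Proof.
rewrite /singular => sing u v u' v'.
by case: (I2P u) => ->; case: (I2P v) => ->; case: (I2P u') => ->; case: (I2P v') => ->; lra.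
Qed.

Lemma singular_tr m : singular m -> singular (fun u v => m v u).
Proof. by rewrite /singular mulrC => ->; rewrite mulrC. Qed.

Lemma singular_zero_diagonals m : (forall u v, 0 <= m u v) -> singular m ->
  (exists u v, m u v = 0) -> forall u v, m u v * m (neg u) (neg v) = 0.
Proof.
rewrite /singular => m_ge0 sing [u0 [v0 zero]] u v.
by case: (I2P u0) zero => ->; case: (I2P v0) => -> zero;
  case: (I2P u) => ->; case: (I2P v) => -> /=; nra.
Qed.

End Tables.

Section Probabilities.
Variable R : realType.
Implicit Types p : state -> R.

Lemma Pr_ext p (E F : pred state) : E =1 F -> Pr p E = Pr p F.
Proof. by move=> eEF; apply: eq_bigl. Qed.

Lemma Pr_split p (E : pred state) (j : 'I_4) :
  Pr p E = Pr p [pred x | E x && (x j == i0)] + Pr p [pred x | E x && (x j == i1)].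
Proof.
rewrite /Pr (bigID (fun x : state => x j == i0)) /=; congr (_ + _).
by apply: eq_bigl => x; case: (E x) (I2P (x j)) => [] [] ->.
Qed.

Lemma Pr_state p (E : pred state) (y : state) : E =1 pred1 y -> Pr p E = p y.
Proof. by move=> eEy; rewrite (Pr_ext p eEy) /Pr big_pred1_eq. Qed.

Lemma Pr_eq0P p (E : pred state) : (forall x, 0 <= p x) ->
  Pr p E = 0 <-> forall x, E x -> p x = 0.
Proof.
move=> p_ge0; split=> [/psumr_eq0P|E0]; last exact: big1.
by move=> H x Ex; apply: H => // y _; exact: p_ge0.
Qed.

Lemma cond_indep_singular p i j k l : (forall x, 0 <= p x) ->
  cond_indep p i j k l <-> forall a b,
    singular (fun u v => Pr p [pred x : state | [&& x i == u, x j == v, x k == a & x l == b]]).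
Proof.
move=> p_ge0.
pose m a b u v := Pr p [pred x : state | [&& x i == u, x j == v, x k == a & x l == b]].
have Pr_i a b u :
    Pr p [pred x : state | [&& x i == u, x k == a & x l == b]] = row_sum (m a b) u.
  rewrite /row_sum (Pr_split _ _ j); congr (_ + _); apply: Pr_ext => x /=.
    by case: (x i == u) (x j == i0) (x k == a) (x l == b) => [] [] [] [].
  by case: (x i == u) (x j == i1) (x k == a) (x l == b) => [] [] [] [].
have Pr_j a b v :
    Pr p [pred x : state | [&& x j == v, x k == a & x l == b]] = col_sum (m a b) v.
  rewrite /col_sum (Pr_split _ _ i); congr (_ + _); apply: Pr_ext => x /=.
    by case: (x i == i0) (x j == v) (x k == a) (x l == b) => [] [] [] [].
  by case: (x i == i1) (x j == v) (x k == a) (x l == b) => [] [] [] [].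
have Pr_kl a b : Pr p [pred x : state | (x k == a) && (x l == b)] = table_sum (m a b).
  have -> : table_sum (m a b) = row_sum (m a b) i0 + row_sum (m a b) i1.
    by rewrite /table_sum /row_sum !addrA.
  rewrite -!Pr_i (Pr_split _ _ i); congr (_ + _); apply: Pr_ext => x /=.
    by case: (x i == i0) (x k == a) (x l == b) => [] [] [].
  by case: (x i == i1) (x k == a) (x l == b) => [] [] [].
have m_ge0 a b u v : 0 <= m a b u v by apply: sumr_ge0.
split=> [indep a b | sing a b].
  apply/(table_indep_singular (m_ge0 a b)) => T_gt0 u v.
  by move: (indep a b); rewrite /= Pr_kl => /(_ T_gt0 u v); rewrite Pr_i Pr_j.
rewrite /= Pr_kl => T_gt0 u v; rewrite Pr_i Pr_j.
exact: (table_indep_singular (m_ge0 a b)).2 (sing a b) T_gt0 u v.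
Qed.

Definition tensor p (a b c d : 'I_2) : R := p (mk a b c d).

Definition singular13 (F : 'I_2 -> 'I_2 -> 'I_2 -> 'I_2 -> R) :=
  forall b d, singular (fun a c => F a b c d).
Definition singular24 (F : 'I_2 -> 'I_2 -> 'I_2 -> 'I_2 -> R) :=
  forall a c, singular (fun b d => F a b c d).

Lemma cond_indep13 p : (forall x, 0 <= p x) ->
  cond_indep p v1 v3 v2 v4 <-> singular13 (tensor p).
Proof.
move=> p_ge0; rewrite cond_indep_singular //.
suff atom u v a b : Pr p [pred x : state | [&& x v1 == u, x v3 == v, x v2 == a & x v4 == b]] =
    tensor p u a v b.
  by split=> sing b d; have := sing b d; rewrite /singular !atom.
apply: (@Pr_state p _ (mk u a v b)) => x /=; rewrite eq_mk.
by case: (x v1 == u) (x v2 == a) (x v3 == v) (x v4 == b) => [] [] [] [].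
Qed.

Lemma cond_indep24 p : (forall x, 0 <= p x) ->
  cond_indep p v2 v4 v1 v3 <-> singular24 (tensor p).
Proof.
move=> p_ge0; rewrite cond_indep_singular //.
suff atom u v a b : Pr p [pred x : state | [&& x v2 == u, x v4 == v, x v1 == a & x v3 == b]] =
    tensor p a u b v.
  by split=> sing a c; have := sing a c; rewrite /singular !atom.
apply: (@Pr_state p _ (mk a u b v)) => x /=; rewrite eq_mk.
by case: (x v1 == a) (x v2 == u) (x v3 == b) (x v4 == v) => [] [] [] [].
Qed.

Lemma model_singular q : in_model_C4 q -> singular13 (tensor q) /\ singular24 (tensor q).
Proof.
case=> _ [_ [psi12 [psi23 [psi34 [psi14 qE]]]]].
by split=> ? ?; rewrite /singular /tensor !qE !mk_nth /=; ring.
Qed.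

Lemma distr_le1 p x : is_distr p -> p x <= 1.
Proof.
case=> p_ge0 <-; rewrite (bigD1 x) //= lerDl.
by apply: sumr_ge0 => y _; exact: p_ge0.
Qed.

Lemma closure_binomial p x1 x2 x3 x4 : is_distr p -> in_closure_model_C4 p ->
  (forall q : state -> R, in_model_C4 q -> q x1 * q x2 = q x3 * q x4) ->
  p x1 * p x2 = p x3 * p x4.
Proof.
move=> pd pc qE; apply/eqP; rewrite -subr_eq0; apply/negPn/negP => ne.
set d := `|p x1 * p x2 - p x3 * p x4|.
have [q [qm close]] : exists q, in_model_C4 q /\ forall x, `|p x - q x| < d / 4.
  by apply: pc; rewrite divr_gt0 // normr_gt0.
have qd : is_distr q by case: qm.
have near_prod x y : `|p x * p y - q x * q y| <= `|p x - q x| + `|p y - q y|.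
  have -> : p x * p y - q x * q y = (p x - q x) * p y + q x * (p y - q y) by ring.
  apply: (le_trans (ler_normD _ _)); rewrite !normrM.
  have := distr_le1 y pd; have := distr_le1 x qd; have := pd.1 y; have := qd.1 x.
  have := normr_ge0 (p x - q x); have := normr_ge0 (p y - q y).
  rewrite (ger0_norm (pd.1 y)) (ger0_norm (qd.1 x)); nra.
have : d <= `|p x1 * p x2 - q x1 * q x2| + `|p x3 * p x4 - q x3 * q x4|.
  rewrite /d; have -> : p x1 * p x2 - p x3 * p x4 =
    (p x1 * p x2 - q x1 * q x2) - (p x3 * p x4 - q x3 * q x4) by rewrite (qE q qm); ring.
  exact: ler_normB.
have := near_prod x1 x2; have := near_prod x3 x4.
have := close x1; have := close x2; have := close x3; have := close x4; lra.
Qed.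

Lemma closure_singular p : is_distr p -> in_closure_model_C4 p ->
  singular13 (tensor p) /\ singular24 (tensor p).
Proof.
move=> pd pc; split=> s t; apply: closure_binomial => // q /model_singular[s13 s24].
  exact: s13.
exact: s24.
Qed.

Lemma degenerate_singular p : (forall x, 0 <= p x) ->
  (exists e, as_equal_next p e) \/ (exists e, as_diff_next p e) ->
  singular13 (tensor p) /\ singular24 (tensor p).
Proof.
move=> p_ge0 deg.
have [e [b edge_b]] : exists e b, forall x, p x != 0 -> (x e == x (ordS e)) = b.
  case: deg => [[e] | [e]] /(Pr_eq0P _ p_ge0) H; exists e.
    by exists true => x; apply: contraNT => /H ->.
  by exists false => x; apply: contraNF => /H ->.
have zero (x y : state) : (x e == x (ordS e)) != (y e == y (ordS e)) -> p x * p y = 0.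
  have [-> | /edge_b ex] := eqVneq (p x) 0; first by rewrite mul0r.
  have [-> | /edge_b ey] := eqVneq (p y) 0; first by rewrite mulr0.
  by rewrite ex ey eqxx.
by split=> s t; rewrite /singular /tensor; case: (I4P e) zero => -> zero;
  case: (I2P s) => ->; case: (I2P t) => ->; rewrite !zero // !mk_nth.
Qed.

Lemma as_equal_next_support p e : (forall x, 0 <= p x) ->
  (forall x, p x != 0 -> x e == x (ordS e)) -> as_equal_next p e.
Proof.
move=> p_ge0 supp; apply/Pr_eq0P => // x /= ne.
by apply: contraTeq ne => /supp; rewrite negbK.
Qed.

Lemma as_diff_next_support p e : (forall x, 0 <= p x) ->
  (forall x, p x != 0 -> x e != x (ordS e)) -> as_diff_next p e.
Proof.
move=> p_ge0 supp; apply/Pr_eq0P => // x /= eq.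
by apply: contraTeq eq => /supp.
Qed.

End Probabilities.

Definition edge_sum (m : 'I_4 -> 'I_2 -> 'I_2 -> nat) (x : state) : nat :=
  \sum_(e : 'I_4) m e (x e) (x (ordS e)).

Section ToricLimits.
Variable R : realType.

Definition edge_prod (f : 'I_4 -> 'I_2 -> 'I_2 -> R) (x : state) : R :=
  \prod_(e : 'I_4) f e (x e) (x (ordS e)).

Lemma in_model_edge_prod (q : state -> R) (f : 'I_4 -> 'I_2 -> 'I_2 -> R) (k : R) :
  is_distr q -> (forall x, 0 < q x) -> (forall x, q x = k * edge_prod f x) ->
  in_model_C4 q.
Proof.
move=> qd qpos qf; split=> //; split=> //.
exists (fun a b => k * f v1 a b), (f v2), (f v3), (fun a b => f v4 b a) => x.
by rewrite qf /edge_prod big_I4 !ordS_v mulr1 !mulrA.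
Qed.

Lemma closure_of_limit (p : state -> R) (f : R -> state -> R) :
  (forall t, 0 < t -> in_model_C4 (f t)) ->
  (forall x, f t x @[t --> 0^'+] --> p x) -> in_closure_model_C4 p.
Proof.
move=> fmod fcvg eps eps_gt0.
have near_p : \forall t \near 0^'+, forall x, `|p x - f t x| < eps.
  by apply: filter_forall => x; move/cvgrPdist_lt: (fcvg x); exact.
near (0 : R)^'+ => t.
exists (f t); split; first by apply: fmod; near: t; exact: nbhs_right_gt.
by near: t.
Unshelve. all: by end_near.
Qed.

Section Toric.
Variables (m : 'I_4 -> 'I_2 -> 'I_2 -> nat) (c : 'I_4 -> 'I_2 -> 'I_2 -> R) (k : nat).
Hypothesis c_ge0 : forall e a b, 0 <= c e a b.
Hypothesis k_le_sum : forall x, (k <= edge_sum m x)%N.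

Let weight (t : R) (x : state) : R :=
  t ^+ (edge_sum m x - k) * edge_prod (fun e a b => c e a b + t) x.

Let weight_cvg x : weight t x @[t --> 0] --> weight 0 x.
Proof.
apply: cvgM; first exact: exprn_continuous.
rewrite /edge_prod; apply: (@cvg_big R _ *%R 1 xpredT mul_continuous) => // e _.
by apply: cvgD; [exact: cvg_cst | exact: cvg_id].
Qed.

(* For t > 0, weight t / sum (weight t) is the model point with edge factors
   (c e a b + t) * t ^+ m e a b; as t -> 0 only the states of minimal
   edge_sum k survive. *)
Lemma closure_of_toric_face (p : state -> R) : is_distr p ->
  (forall x, p x = if edge_sum m x == k then edge_prod c x else 0) ->
  in_closure_model_C4 p.
Proof.
move=> [p_ge0 p_sum1] pE.
have weight0 x : weight 0 x = p x.
  rewrite /weight expr0n pE subn_eq0 eqn_leq k_le_sum andbT.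
  under [edge_prod _ x]eq_bigr do rewrite addr0.
  by case: leqP; rewrite ?mul1r ?mul0r.
pose Z t := \sum_y weight t y.
have Z_cvg : Z t @[t --> (0 : R)] --> (1 : R).
  rewrite -p_sum1 (eq_bigr _ (fun y _ => esym (weight0 y))).
  by apply: (@cvg_big R _ +%R 0 xpredT add_continuous) => // y _; exact: weight_cvg.
apply: (@closure_of_limit _ (fun t x => weight t x / Z t)) => [t t_gt0|x].
  have wpos x : 0 < weight t x.
    by rewrite mulr_gt0 ?exprn_gt0 // prodr_gt0 // => e _; rewrite ltr_wpDl.
  have Zpos : 0 < Z t.
    rewrite /Z (bigD1 (mk i0 i0 i0 i0)) //= ltr_wpDr // sumr_ge0 // => y _; exact: ltW.
  have t_neq0 : t != 0 by rewrite gt_eqF.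
  apply: (@in_model_edge_prod _ (fun e a b => (c e a b + t) * t ^+ m e a b)
    (t ^+ k * Z t)^-1) => [|x|x]; last 2 first.
  - by rewrite divr_gt0.
  - rewrite /weight exprB ?unitfE // /edge_prod big_split /= prodrXr -/(edge_sum m x).
    by field; rewrite gt_eqF // expf_neq0.
  split=> [x|]; first by rewrite divr_ge0 // ltW.
  by rewrite -mulr_suml mulfV // gt_eqF.
apply: cvg_at_right_filter; rewrite -[p x]divr1 -weight0.
by apply: cvgM; [exact: weight_cvg | exact: cvgV (oner_neq0 _) Z_cvg].
Qed.

End Toric.
End ToricLimits.

Section PositiveSlice.
Variable R : realType.
Implicit Types F : 'I_2 -> 'I_2 -> 'I_2 -> 'I_2 -> R.

Definition cycle_factorizable F := exists f12 f23 f34 f41 : 'I_2 -> 'I_2 -> R,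
  (forall a b, [/\ 0 <= f12 a b, 0 <= f23 a b, 0 <= f34 a b & 0 <= f41 a b]) /\
  forall a b c d, F a b c d = f12 a b * f23 b c * f34 c d * f41 d a.

Lemma pos_mul_factors (x y : R) : 0 <= x -> 0 <= y -> 0 < x * y -> 0 < x /\ 0 < y.
Proof.
by rewrite !le0r => /orP[/eqP-> | x_gt0] /orP[/eqP-> | y_gt0]; rewrite ?mul0r ?mulr0 ?ltxx.
Qed.

(* X1 _||_ X3 | X2, X4 writes F a b c d as F a b s3 d * F s1 b c d / F s1 b s3 d,
   and X2 _||_ X4 | X1, X3 splits each of these three tables into a row factor
   and a column factor. *)
Lemma positive_slice13_factorizable F s1 s3 : (forall a b c d, 0 <= F a b c d) ->
  singular13 F -> singular24 F -> (forall b d, 0 < F s1 b s3 d) -> cycle_factorizable F.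
Proof.
move=> F_ge0 sing13 sing24 pos.
pose A a b d := F a b s3 d; pose B c b d := F s1 b c d.
have A_ge0 a b d : 0 <= A a b d by exact: F_ge0.
have B_ge0 c b d : 0 <= B c b d by exact: F_ge0.
have Afact a b d : A a b d = row_sum (A a) b * col_share (A a) d.
  exact: singular_rank1 (A_ge0 a) (sing24 a s3) b d.
have Bfact c b d : B c b d = row_sum (B c) b * col_share (B c) d.
  exact: singular_rank1 (B_ge0 c) (sing24 s1 c) b d.
have B_gt0 b d : 0 < row_sum (B s3) b /\ 0 < col_share (B s3) d.
  by apply: pos_mul_factors; rewrite ?row_sum_ge0 ?col_share_ge0 // -Bfact; exact: pos.
exists (fun a b => row_sum (A a) b), (fun b c => row_sum (B c) b / row_sum (B s3) b),
  (fun c d => col_share (B c) d / col_share (B s3) d), (fun d a => col_share (A a) d).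
split=> [a b | a b c d].
  have [[rB _] [_ cB]] := (B_gt0 a a, B_gt0 b b).
  split; last exact: col_share_ge0.
  - exact: row_sum_ge0.
  - by apply: divr_ge0 (ltW rB); exact: row_sum_ge0.
  - by apply: divr_ge0 (ltW cB); exact: col_share_ge0.
have [rB cB] := B_gt0 b d.
have cross := singular_cross (sing13 b d) a c s1 s3.
have Fn0 : F s1 b s3 d != 0 by rewrite gt_eqF.
rewrite -(mulfK Fn0 (F a b c d)) cross -/(A a b d) -/(B c b d) -/(B s3 b d).
by rewrite Afact !Bfact; field; rewrite !gt_eqF.
Qed.

Lemma positive_slice24_factorizable F s2 s4 : (forall a b c d, 0 <= F a b c d) ->
  singular13 F -> singular24 F -> (forall a c, 0 < F a s2 c s4) -> cycle_factorizable F.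
Proof.
move=> F_ge0 sing13 sing24 pos.
have [f12 [f23 [f34 [f41 [f_ge0 fE]]]]] : cycle_factorizable (fun a b c d => F d a b c).
  apply: (positive_slice13_factorizable (s1 := s2) (s3 := s4)) => [a b c d | b d | a c | b d].
  - exact: F_ge0.
  - exact: sing24.
  - exact: singular_tr (sing13 a c).
  - exact: pos.
exists f41, f12, f23, f34; split=> [a b | a b c d]; last by rewrite fE; ring.
by have [] := f_ge0 a b; split.
Qed.

Lemma closure_of_factorizable p : is_distr p -> cycle_factorizable (tensor p) ->
  in_closure_model_C4 p.
Proof.
move=> pd [f12 [f23 [f34 [f41 [f_ge0 fE]]]]].
apply: (@closure_of_toric_face _ (fun _ _ _ => 0%N) (fun e => nth f12 [:: f12; f23; f34; f41] e) 0%N)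
  => // [e a b | x].
  by have [? ? ? ?] := f_ge0 a b; case: (I4P e) => ->.
rewrite /edge_sum big1_eq eqxx /edge_prod big_I4 !ordS_v mulr1 !mulrA /=.
by rewrite [x in p x]state_mk -/(tensor p _ _ _ _) fE.
Qed.

Lemma slice13_dichotomy F : (forall a b c d, 0 <= F a b c d) ->
  (exists s1 s3, forall b d, 0 < F s1 b s3 d) \/ (forall a c, exists b d, F a b c d = 0).
Proof.
move=> F_ge0.
have [/existsP[s1 /existsP[s3 /forallP pos]] | /existsPn no_pos] :=
  boolP [exists s1, exists s3, [forall b, forall d, 0 < F s1 b s3 d]].
  by left; exists s1, s3 => b d; exact: (forallP (pos b)).
right=> a c; move: (no_pos a) => /existsPn/(_ c)/forallPn[b /forallPn[d]].
by rewrite lt0r F_ge0 andbT negbK => /eqP zero; exists b, d.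
Qed.

End PositiveSlice.

Section Face.
Variable R : realType.
Variable g : 'I_4 -> bool.
Hypothesis g_odd : odd (\sum_(e : 'I_4) g e).

Definition mismatch (x : state) : nat := edge_sum (fun e a b => (a != b) != g e) x.

Lemma mismatch_gt0 x : (0 < mismatch x)%N.
Proof.
rewrite lt0n; apply: contraL g_odd; rewrite sum_nat_eq0 => /forallP agree.
rewrite (eq_bigr (fun e => nat_of_bool (x e != x (ordS e)))) ?edge_changes_even // => e _.
by move: (agree e); case: (g e); case: (x e != x (ordS e)).
Qed.

Lemma mismatch1P x : mismatch x = 1%N ->
  exists e, forall e', ((x e' != x (ordS e')) != g e') = (e' == e).
Proof.
move/eqP/sum_nat_eq1 => [e [_ wrong_e right]]; exists e => e'.
have [-> | ne] := eqVneq e'; first by move: wrong_e; case: (_ != _).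
by move: (right e' ne isT); case: (_ != _).
Qed.

Lemma mismatch1_unique x y e : mismatch x = 1%N -> mismatch y = 1%N ->
  (x e != x (ordS e)) != g e -> x e = y e -> x (ordS e) = y (ordS e) -> x = y.
Proof.
move=> /mismatch1P [ex wx] /mismatch1P [ey wy] wrong exy exy'.
have ex_e : ex = e by apply/esym/eqP; rewrite -wx.
have ey_e : ey = e by apply/esym/eqP; rewrite -wy -exy -exy'.
apply: (eq_state_edges (v := e)) => // e'.
by move: (wx e') (wy e'); rewrite ex_e ey_e => <-; case: (_ == _) (_ == _) (g e') => [] [] [].
Qed.

Variable p : state -> R.

(* By mismatch1_unique the sum has at most one term: the state of mismatch one
   whose deviating edge e carries the values (a, b). *)
Definition face_weight (e : 'I_4) (a b : 'I_2) : R :=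
  if (a != b) != g e then
    \sum_(y : state | [&& y e == a, y (ordS e) == b & mismatch y == 1%N]) p y
  else 1.

Lemma closure_of_face : is_distr p -> (forall x, p x != 0 -> mismatch x = 1%N) ->
  in_closure_model_C4 p.
Proof.
move=> pd supp; apply: (closure_of_toric_face (k := 1%N) (c := face_weight)) => //.
- move=> e a b; rewrite /face_weight; case: ifP => // _.
  by apply: sumr_ge0 => y _; exact: pd.1.
- exact: mismatch_gt0.
move=> x; have [one | ne1] := eqVneq (mismatch x) 1%N; last first.
  by apply: contraNeq ne1 => /supp ->.
have [e wrong] := mismatch1P one.
rewrite /edge_prod (bigD1 e) //= big1 => [|e' ne]; last first.
  by rewrite /face_weight wrong (negbTE ne).
rewrite mulr1 /face_weight wrong eqxx (big_pred1 x) // => y /=.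
apply/and3P/eqP => [[/eqP ye /eqP ye' /eqP y1] | ->]; last by rewrite !eqxx one.
by apply/esym/(mismatch1_unique (e := e) one y1); rewrite ?wrong ?ye ?ye'.
Qed.

End Face.

Definition edge_bits (b1 b2 b3 b4 : bool) (e : 'I_4) : bool := nth false [:: b1; b2; b3; b4] e.

Section NoPositiveSlice.
Variable R : realType.
Implicit Types p : state -> R.

Lemma cross_products_eq0 (u u' v v' : R) : 0 <= u -> 0 <= u' -> 0 <= v -> 0 <= v' ->
  u * v = 0 -> u * v' = 0 -> u' * v = 0 -> u' * v' = 0 ->
  (u = 0 /\ u' = 0) \/ (v = 0 /\ v' = 0).
Proof.
move=> ? ? ? ? uv uv' u'v u'v'.
have /eqP : (u + u') * (v + v') = 0 by rewrite mulrDl !mulrDr uv uv' u'v u'v' !addr0.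
by rewrite mulf_eq0 => /orP[] /eqP ?; [left | right]; split; lra.
Qed.

(* The classes {mk i0 i0 c d, mk i1 i1 (neg c) (neg d)} and
   {mk i0 i1 c (neg d), mk i1 i0 (neg c) d} have complementary edge patterns,
   and any state of either one differs from any state of the other at two
   opposite vertices, i.e. lies on a diagonal of a common slice with it. *)
Lemma complementary_class_null p c d : (forall x, 0 <= p x) ->
  singular13 (tensor p) -> singular24 (tensor p) ->
  (forall a c, exists b d, tensor p a b c d = 0) ->
  (forall b d, exists a c, tensor p a b c d = 0) ->
  (tensor p i0 i0 c d = 0 /\ tensor p i1 i1 (neg c) (neg d) = 0) \/
  (tensor p i0 i1 c (neg d) = 0 /\ tensor p i1 i0 (neg c) d = 0).
Proof.
move=> p_ge0 sing13 sing24 zero_ac zero_bd.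
have zero24 x1 x3 x2 x4 : tensor p x1 x2 x3 x4 * tensor p x1 (neg x2) x3 (neg x4) = 0.
  apply: (singular_zero_diagonals (m := fun x2 x4 => tensor p x1 x2 x3 x4)) => //.
  by move=> ? ?; exact: p_ge0.
have zero13 x2 x4 x1 x3 : tensor p x1 x2 x3 x4 * tensor p (neg x1) x2 (neg x3) x4 = 0.
  apply: (singular_zero_diagonals (m := fun x1 x3 => tensor p x1 x2 x3 x4)) => //.
  by move=> ? ?; exact: p_ge0.
apply: cross_products_eq0; try exact: p_ge0.
- exact: zero24.
- exact: zero13.
- by rewrite -{2}[c]negK; exact: zero13.
- by rewrite -{2}[d]negK; exact: zero24.
Qed.

Ltac support_by_states vanish :=
  let x := fresh "x" in intro x; rewrite (state_mk x);
  case: (I2P (x v1)) => ->; case: (I2P (x v2)) => ->;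
  case: (I2P (x v3)) => ->; case: (I2P (x v4)) => ->;
  rewrite ?vanish ?eqxx //= ?/mismatch ?/edge_sum ?big_I4 !mk_nth.

Lemma no_positive_slice_cases p : is_distr p ->
  singular13 (tensor p) -> singular24 (tensor p) ->
  (forall a c, exists b d, tensor p a b c d = 0) ->
  (forall b d, exists a c, tensor p a b c d = 0) ->
  in_closure_model_C4 p \/ (exists e, as_equal_next p e) \/ (exists e, as_diff_next p e).
Proof.
move=> pd sing13 sing24 zero_ac zero_bd; have p_ge0 := pd.1.
have classes c d := complementary_class_null c d p_ge0 sing13 sing24 zero_ac zero_bd.
have equal e := @as_equal_next_support R p e p_ge0.
have diff e := @as_diff_next_support R p e p_ge0.
move: (classes i0 i0) (classes i0 i1) (classes i1 i0) (classes i1 i1); rewrite /tensor /neg /=.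
move=> [[z1 z2]|[z1 z2]] [[z3 z4]|[z3 z4]] [[z5 z6]|[z5 z6]] [[z7 z8]|[z7 z8]];
  have vanish := (z1, z2, z3, z4, z5, z6, z7, z8).
(* One goal per choice of null class for (c, d) = (i0, i0), (i0, i1), (i1, i0),
   (i1, i1), the first class before the second. *)
- by right; right; exists v1; apply: diff; support_by_states vanish.
- by left; apply: (closure_of_face (g := edge_bits true true false true)) => //;
    [rewrite big_I4 | support_by_states vanish].
- by left; apply: (closure_of_face (g := edge_bits true true true false)) => //;
    [rewrite big_I4 | support_by_states vanish].
- by right; right; exists v2; apply: diff; support_by_states vanish.
- by left; apply: (closure_of_face (g := edge_bits true false true true)) => //;
    [rewrite big_I4 | support_by_states vanish].
- by right; right; exists v4; apply: diff; support_by_states vanish.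
- by right; right; exists v3; apply: diff; support_by_states vanish.
- by left; apply: (closure_of_face (g := edge_bits false true true true)) => //;
    [rewrite big_I4 | support_by_states vanish].
- by left; apply: (closure_of_face (g := edge_bits true false false false)) => //;
    [rewrite big_I4 | support_by_states vanish].
- by right; left; exists v3; apply: equal; support_by_states vanish.
- by right; left; exists v4; apply: equal; support_by_states vanish.
- by left; apply: (closure_of_face (g := edge_bits false true false false)) => //;
    [rewrite big_I4 | support_by_states vanish].
- by right; left; exists v2; apply: equal; support_by_states vanish.
- by left; apply: (closure_of_face (g := edge_bits false false false true)) => //;
    [rewrite big_I4 | support_by_states vanish].
- by left; apply: (closure_of_face (g := edge_bits false false true false)) => //;
    [rewrite big_I4 | support_by_states vanish].
- by right; left; exists v1; apply: equal; support_by_states vanish.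
Qed.

End NoPositiveSlice.

Theorem proposition1p1 (R : realType) (p : state -> R) :
  is_distr p ->
  (cond_indep p v1 v3 v2 v4 /\ cond_indep p v2 v4 v1 v3 <->
   in_closure_model_C4 p \/
   (exists i : 'I_4, as_equal_next p i) \/
   (exists i : 'I_4, as_diff_next p i)).
Proof.
move=> pd; have p_ge0 := pd.1; rewrite cond_indep13 // cond_indep24 //.
split=> [[sing13 sing24] | [closure | degenerate]]; last 2 first.
- exact: closure_singular.
- exact: degenerate_singular.
have tensor_ge0 a b c d : 0 <= tensor p a b c d by exact: p_ge0.
have [[s1 [s3 pos]] | zero_ac] := slice13_dichotomy tensor_ge0.
  left; apply: closure_of_factorizable => //.
  exact: positive_slice13_factorizable tensor_ge0 sing13 sing24 pos.
have [[s2 [s4 pos]] | zero_bd] :=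
  slice13_dichotomy (F := fun a b c d => tensor p b a d c) (fun a b c d => tensor_ge0 b a d c).
  left; apply: closure_of_factorizable => //.
  exact: positive_slice24_factorizable tensor_ge0 sing13 sing24 pos.
exact: no_positive_slice_cases.
Qed.
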